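(* Let $k$ be a field, $V$ a $k$-vector space, and $\varphi\in\operatorname{End}_k(V)$ a finite potent endomorphism. Then the Drazin inverse $\varphi^D$ of $\varphi$ is a G-Drazin inverse of $\varphi$ if and only if $i(\varphi)\le 1$.
   Context: An endomorphism $\varphi$ of a $k$-vector space $V$ is finite potent if $\varphi^n(V)$ is finite dimensional for some $n$. For such $\varphi$, the AST-decomposition is $V=U_\varphi\oplus W_\varphi$ where $U_\varphi=\{v\in V: \varphi^m(v)=0 \text{ for some } m\}$ and $W_\varphi=\{v\in V: p(\varphi)(v)=0 \text{ for some } p(x)\in k[x] \text{ coprime to } x\}$; $\varphi|_{U_\varphi}$ is nilpotent, $W_\varphi$ is finite dimensional and $\varphi|_{W_\varphi}$ is an automorphism. The index $i(\varphi)$ is the nilpotency order of $\varphi|_{U_\varphi}$. The Drazin inverse $\varphi^D$ is the linear map equal to $(\varphi|_{W_\varphi})^{-1}$ on $W_\varphi$ and to $0$ on $U_\varphi$. An endomorphism $\psi$ is a G-Drazin inverse of $\varphi$ if $\varphi\circ\psi\circ\varphi=\varphi$ and $\psi\circ\varphi^{r}=\varphi^{r}\circ\psi$ with $r=i(\varphi)$. *)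

From HB Require Import structures.
From mathcomp Require Import all_boot all_order all_algebra.
Set Implicit Arguments. Unset Strict Implicit. Unset Printing Implicit Defensive.
Import GRing.Theory.
Local Open Scope ring_scope.

Section FinitePotent.
Variables (k : fieldType) (V : lmodType k).

Definition in_span (s : seq V) (v : V) : Prop :=
  exists c : 'I_(size s) -> k, v = \sum_(i < size s) c i *: s`_i.

(* phi^n(V) is finite dimensional (contained in a finitely generated subspace). *)
Definition finite_potent (phi : V -> V) : Prop :=
  exists n : nat, exists s : seq V,
    forall w : V, in_span s (iter n phi w).

Definition poly_endo (p : {poly k}) (phi : V -> V) (v : V) : V :=
  \sum_(i < size p) p`_i *: iter i phi v.

Definition U_sp (phi : V -> V) (v : V) : Prop :=
  exists m : nat, iter m phi v = 0.

Definition W_sp (phi : V -> V) (v : V) : Prop :=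
  exists p : {poly k}, coprimep p 'X /\ poly_endo p phi v = 0.

Definition is_index (phi : V -> V) (r : nat) : Prop :=
  (forall u, U_sp phi u -> iter r phi u = 0) /\
  (forall m, (forall u, U_sp phi u -> iter m phi u = 0) -> (r <= m)%N).

Definition is_drazin_inverse (phi psi : V -> V) : Prop :=
  linear psi /\
  (forall u, U_sp phi u -> psi u = 0) /\
  (forall w, W_sp phi w -> W_sp phi (psi w) /\ phi (psi w) = w).

Definition is_G_drazin_inverse (phi psi : V -> V) (r : nat) : Prop :=
  (forall v, phi (psi (phi v)) = phi v) /\
  (forall v, psi (iter r phi v) = iter r phi (psi v)).

End FinitePotent.

(* For every v, finite potency yields a nonzero polynomial killing phi^n v
   (the m + 1 vectors phi^(n+j) v lie in the span of m vectors); removing its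
   power of x leaves p coprime to x with p(phi) phi^N v = 0, and a Bezout
   identity a x^N + b p = 1 splits v = b(phi) p(phi) v + a(phi) phi^N v into a
   part of U_phi and a part of W_phi.  If i(phi) <= 1 then phi kills U_phi, so
   phi^D phi v is the W_phi-part of v, and both G-Drazin identities follow.
   If i(phi) >= 2, applying phi phi^D phi = phi to phi^(i-2) u with u in U_phi
   gives phi^(i-1) u = phi phi^D phi^(i-1) u = 0, against the minimality of
   i(phi). *)

From HB Require Import structures.
From mathcomp Require Import all_boot all_order all_algebra.

Set Implicit Arguments. Unset Strict Implicit. Unset Printing Implicit Defensive.
Import GRing.Theory.
Local Open Scope ring_scope.

Section FinitePotentEndomorphism.
Variables (k : fieldType) (V : lmodType k) (phi : {linear V -> V}).
Implicit Types (p q : {poly k}) (u v w : V).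

Lemma iter_is_linear n : linear (iter n phi).
Proof. by elim: n => [|n IH] a x y //=; rewrite IH linearP. Qed.

HB.instance Definition _ n :=
  GRing.isLinear.Build k V V *:%R (iter n phi) (iter_is_linear n).

Lemma poly_endo_is_linear p : linear (poly_endo p phi).
Proof.
move=> a x y; rewrite /poly_endo scaler_sumr -big_split /=.
by apply: eq_bigr => i _; rewrite linearP scalerDr !scalerA mulrC.
Qed.

HB.instance Definition _ p :=
  GRing.isLinear.Build k V V *:%R (poly_endo p phi) (poly_endo_is_linear p).

Lemma poly_endo_widen p n v : (size p <= n)%N ->
  poly_endo p phi v = \sum_(i < n) p`_i *: iter i phi v.
Proof.
move=> le_p_n; rewrite /poly_endo.
rewrite (big_ord_widen n (fun i => p`_i *: iter i phi v) le_p_n) big_mkcond.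
by apply: eq_bigr => i _; case: ltnP => // le_p_i; rewrite nth_default ?scale0r.
Qed.

Lemma poly_endoD p q v :
  poly_endo (p + q) phi v = poly_endo p phi v + poly_endo q phi v.
Proof.
pose n := maxn (size p) (size q).
rewrite !(poly_endo_widen (n := n)) ?leq_maxl ?leq_maxr //; last first.
  by rewrite (leq_trans (size_polyD _ _)).
by rewrite -big_split; apply: eq_bigr => i _; rewrite coefD scalerDl.
Qed.

Lemma poly_endoZ c p v : poly_endo (c *: p) phi v = c *: poly_endo p phi v.
Proof.
rewrite (poly_endo_widen (n := size p)) ?size_scale_leq // scaler_sumr.
by apply: eq_bigr => i _; rewrite coefZ scalerA.
Qed.

Lemma poly_endoC c v : poly_endo c%:P phi v = c *: v.
Proof.
by rewrite (poly_endo_widen (n := 1)) ?size_polyC_leq1 // big_ord1 coefC.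
Qed.

Lemma poly_endoMX p v : poly_endo (p * 'X) phi v = poly_endo p phi (phi v).
Proof.
have le_pX : (size (p * 'X)%R <= (size p).+1)%N.
  by rewrite (leq_trans (size_polyMleq _ _)) // size_polyX addn2.
rewrite (poly_endo_widen _ le_pX) big_ord_recl coefMX /= scale0r add0r.
by apply: eq_bigr => i _; rewrite coefMX /= -iterS iterSr.
Qed.

Lemma poly_endo_phi p v : phi (poly_endo p phi v) = poly_endo p phi (phi v).
Proof.
rewrite /poly_endo linear_sum; apply: eq_bigr => i _.
by rewrite linearZ /= -iterS iterSr.
Qed.

Lemma poly_endoM p q v :
  poly_endo (p * q) phi v = poly_endo p phi (poly_endo q phi v).
Proof.
elim/poly_ind: p q v => [|p c IH] q v.
  by rewrite mul0r -polyC0 !poly_endoC !scale0r.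
rewrite mulrDl -mulrA poly_endoD IH poly_endoD poly_endoMX mul_polyC poly_endoZ.
by rewrite poly_endoC mulrC poly_endoMX poly_endo_phi.
Qed.

Lemma poly_endoXn n v : poly_endo 'X^n phi v = iter n phi v.
Proof.
elim: n v => [|n IH] v; first by rewrite expr0 -polyC1 poly_endoC scale1r.
by rewrite exprSr poly_endoMX IH iterSr.
Qed.

Lemma poly_endo_comm p q v :
  poly_endo p phi (poly_endo q phi v) = poly_endo q phi (poly_endo p phi v).
Proof. by rewrite -!poly_endoM mulrC. Qed.

Lemma coprimepX p : coprimep p 'X = ~~ root p 0.
Proof. by rewrite -coprimep_XsubC polyC0 subr0. Qed.

Lemma U_sp_iter n u : U_sp phi u -> U_sp phi (iter n phi u).
Proof. by case=> m Hm; exists m; rewrite -iterD addnC iterD Hm linear0. Qed.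

Lemma W_sp_phi w : W_sp phi w -> W_sp phi (phi w).
Proof. by case=> p [cp Hp]; exists p; rewrite -poly_endo_phi Hp linear0. Qed.

Lemma W_spB w1 w2 : W_sp phi w1 -> W_sp phi w2 -> W_sp phi (w1 - w2).
Proof.
case=> p1 [cp1 H1] [p2 [cp2 H2]]; exists (p1 * p2); split.
  by rewrite coprimepMl cp1 cp2.
by rewrite linearB /= !poly_endoM H2 poly_endo_comm H1 linear0 linear0 subrr.
Qed.

Lemma W_sp_phi_eq0 w : W_sp phi w -> phi w = 0 -> w = 0.
Proof.
case=> p [cp pw0] phiw0; move: pw0.
rewrite (poly_endo_widen (n := (size p).+1)) // big_ord_recl.
rewrite big1 ?addr0 => [|i _].
  move: cp; rewrite coprimepX rootE horner_coef0 => /negbTE p0_nz /eqP.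
  by rewrite scaler_eq0 p0_nz => /eqP.
by rewrite /= add0n -iterS iterSr phiw0 linear0 scaler0.
Qed.

Lemma in_span_dependent (s : seq V) (f : 'I_(size s).+1 -> V) :
    (forall j, in_span s (f j)) ->
  exists2 x : 'rV[k]_(size s).+1, x != 0 & \sum_j x 0 j *: f j = 0.
Proof.
move=> f_span; have [c Ec] := fin_all_exists f_span.
pose C : 'M[k]_((size s).+1, size s) := \matrix_(j, i) c j i.
have : kermx C != 0 by rewrite kermx_eq0 /row_free ltn_eqF // ltnS rank_leq_col.
case/rowV0Pn => x /sub_kermxP xC0 x_nz; exists x => //.
under eq_bigr do rewrite Ec scaler_sumr.
rewrite exchange_big big1 //= => i _.
have xCi : \sum_j x 0 j * c j i = 0.
  transitivity ((x *m C) 0 i); last by rewrite xC0 mxE.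
  by rewrite mxE; apply: eq_bigr => j _; rewrite mxE.
under eq_bigr do rewrite scalerA.
by rewrite -scaler_suml xCi scale0r.
Qed.

Lemma finite_potent_annihilator v : finite_potent phi ->
  exists n q, q != 0 /\ poly_endo q phi (iter n phi v) = 0.
Proof.
case=> n [s span_s].
have [|x x_nz Hx] := @in_span_dependent s (fun j => iter j phi (iter n phi v)).
  by move=> j; rewrite -iterD addnC iterD.
exists n, (rVpoly x); split.
  by apply: contraNneq x_nz => xq0; rewrite -[x]rVpolyK xq0 linear0.
rewrite (poly_endo_widen (n := (size s).+1)) ?size_poly //.
by under eq_bigr do rewrite coef_rVpoly_ord.
Qed.

Lemma annihilator_coprimeX q v : q != 0 -> poly_endo q phi v = 0 ->
  exists n p, coprimep p 'X /\ poly_endo p phi (iter n phi v) = 0.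
Proof.
move=> q_nz qv0; have [n [p p0 Eq]] := multiplicity_XsubC q 0.
exists n, p; split; first by rewrite coprimepX (implyP p0).
by rewrite polyC0 subr0 in Eq; rewrite -poly_endoXn -poly_endoM -Eq.
Qed.

Lemma finite_potent_decomp v : finite_potent phi ->
  exists u w, [/\ U_sp phi u, W_sp phi w & v = u + w].
Proof.
move=> fp; have [m [q [q_nz qv0]]] := finite_potent_annihilator v fp.
have [n [p [cpX pv0]]] := annihilator_coprimeX q_nz qv0; rewrite -iterD in pv0.
have /Bezout_eq1_coprimepP [[a b] /= Bezout] : coprimep 'X^(n + m) p.
  by rewrite coprimep_expl // coprimep_sym.
exists (poly_endo (b * p) phi v), (poly_endo (a * 'X^(n + m)) phi v); split.
- exists (n + m)%N; rewrite -poly_endoXn poly_endo_comm !poly_endoM.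
  by rewrite poly_endoXn pv0 linear0.
- by exists p; rewrite -poly_endoM mulrCA !poly_endoM poly_endoXn pv0 linear0.
- by rewrite -poly_endoD addrC Bezout -polyC1 poly_endoC scale1r.
Qed.

Lemma index_le1_U_sp_ker r u :
  is_index phi r -> (r <= 1)%N -> U_sp phi u -> phi u = 0.
Proof.
case=> rU _ r_le1 Uu; move: (rU u Uu) r_le1.
by case: r {rU} => [|[|]] //= -> _; rewrite linear0.
Qed.

Section DrazinInverse.
Variable phiD : V -> V.
Hypothesis HD : is_drazin_inverse phi phiD.

Lemma drazin_inverse_phi_W w : W_sp phi w -> phiD (phi w) = w.
Proof.
case: HD => _ [_ phiD_W] Ww; have [WDw phiDw] := phiD_W _ (W_sp_phi Ww).
apply/eqP; rewrite -subr_eq0; apply/eqP/(W_sp_phi_eq0 (W_spB WDw Ww)).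
by rewrite linearB /= phiDw subrr.
Qed.

Lemma index_le1_of_drazin_inner_inverse r : is_index phi r ->
  (forall v, phi (phiD (phi v)) = phi v) -> (r <= 1)%N.
Proof.
case: HD => _ [phiD_U _] [_ r_min] phiDphi; case: r r_min => [|[|r]] // r_min.
suff: (r.+2 <= r.+1)%N by rewrite ltnn.
apply: r_min => u Uu; have := phiDphi (iter r phi u).
by rewrite -iterS phiD_U ?linear0 => [<-|]; last exact: U_sp_iter.
Qed.

Lemma G_drazin_of_index_le1 r : finite_potent phi -> is_index phi r ->
  (r <= 1)%N -> is_G_drazin_inverse phi phiD r.
Proof.
case: HD => phiD_lin [phiD_U phiD_W] fp ir r_le1.
have U_ker u : U_sp phi u -> phi u = 0 := index_le1_U_sp_ker ir r_le1.
have phiDD x y : phiD (x + y) = phiD x + phiD y.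
  by rewrite -[x]scale1r phiD_lin !scale1r.
split=> v; have [u [w [Uu Ww ->]]] := finite_potent_decomp v fp.
  by rewrite linearD /= (U_ker u) // add0r drazin_inverse_phi_W.
case: r r_le1 {ir} => [|[|]] // _.
rewrite /= linearD /= (U_ker u) // add0r drazin_inverse_phi_W //.
by rewrite phiDD phiD_U // add0r (phiD_W _ Ww).2.
Qed.

End DrazinInverse.
End FinitePotentEndomorphism.

Theorem corollary3p13 (k : fieldType) (V : lmodType k) (phi : {linear V -> V})
  (Hfp : finite_potent phi) (r : nat) (Hr : is_index phi r)
  (phiD : V -> V) (HD : is_drazin_inverse phi phiD) :
  is_G_drazin_inverse phi phiD r <-> (r <= 1)%N.
Proof.
split=> [[inner_inverse _]|].
  exact: (index_le1_of_drazin_inner_inverse HD Hr inner_inverse).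
exact: G_drazin_of_index_le1.
Qed.
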